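(* Assume the Continuum Hypothesis. Then there exists a maximal almost disjoint family $\mathcal A$ of infinite subsets of $\omega$, each member of which is not an IP-set, such that for every AP-set $B\subseteq\omega$ and every finite-to-one function $f:B\to\omega$ there exist an AP-set $C\subseteq B$ and $A\in\mathcal A$ with $f[C]\subseteq A$.
   Context: $\omega=\{0,1,2,\dots\}$. A set $A\subseteq\omega$ is an AP-set if it contains arithmetic progressions of every finite length. For $B\subseteq\omega$, $FS(B)$ denotes the set of all sums $\sum_{n\in F}n$ over nonempty finite subsets $F\subseteq B$. A set $A\subseteq\omega$ is an IP-set if there is an infinite $B\subseteq\omega$ with $FS(B)\subseteq A$. A family $\mathcal A$ of infinite subsets of $\omega$ is almost disjoint if any two distinct members have finite intersection, and maximal almost disjoint if moreover every infinite $D\subseteq\omega$ has infinite intersection with some member of $\mathcal A$. *)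

From mathcomp Require Import all_boot.
From mathcomp Require Import boolp classical_sets cardinality.
Set Implicit Arguments. Unset Strict Implicit. Unset Printing Implicit Defensive.
Local Open Scope classical_set_scope.

(* Continuum Hypothesis: 2^aleph0 = aleph1, i.e. P(omega) carries a well-order
   of order type omega_1 (every proper initial segment is countable). *)
Definition CH : Prop :=
  exists lt : set nat -> set nat -> Prop,
    well_founded lt /\
    (forall x y z, lt x y -> lt y z -> lt x z) /\
    (forall x y, lt x y \/ x = y \/ lt y x) /\
    (forall y, countable [set x | lt x y]).

Definition AP_set (A : set nat) : Prop :=
  forall k : nat, exists a d : nat, (0 < d)%N /\
    forall i : nat, (i < k)%N -> A (a + i * d)%N.

Definition FS_sub (B A : set nat) : Prop :=
  forall s : seq nat, uniq s -> s != [::] -> (forall x, x \in s -> B x) ->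
    A (sumn s).

Definition IP_set (A : set nat) : Prop :=
  exists B : set nat, infinite_set B /\ FS_sub B A.

Definition almost_disjoint (F : set (set nat)) : Prop :=
  (forall A, F A -> infinite_set A) /\
  (forall A A', F A -> F A' -> A <> A' -> finite_set (A `&` A')).

Definition MAD (F : set (set nat)) : Prop :=
  almost_disjoint F /\
  (forall D : set nat, infinite_set D -> exists2 A, F A & infinite_set (D `&` A)).

Definition finite_to_one_on (B : set nat) (f : nat -> nat) : Prop :=
  forall n : nat, finite_set (B `&` f @^-1` [set n]).

(* Under CH the tasks of the construction -- an infinite set D that some member
   must meet infinitely, or an AP-set B with a finite-to-one f whose image of an
   AP-subset some member must contain -- can be listed in order type omega_1.
   Going through the list, the family built so far is countable, and unless an
   earlier member already does the job we add a thin set (for each b > 0 only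
   finitely many c with c and c + b in it, so not an IP-set) almost disjoint
   from it.  For a set D a lacunary subset of D works.  For a pair (B, f) that
   no earlier member serves, no preimage of an earlier member contains an
   AP-set, so partition regularity of AP-sets (van der Waerden) yields, for
   each k, a progression of length k in B whose f-values avoid the first k
   earlier members, lie above all previous values and are congruent modulo
   k + 1; the image of the union of these progressions is the new member. *)

From mathcomp Require Import all_boot.
From mathcomp Require Import boolp classical_sets cardinality.
From mathcomp Require Import zify.
From mathcomp Require finmap.
Set Implicit Arguments. Unset Strict Implicit. Unset Printing Implicit Defensive.
Local Open Scope classical_set_scope.

Lemma finite_set_bounded (A : set nat) :
  finite_set A -> exists N, forall x, A x -> x < N.
Proof.
move=> /finite_fsetP [X ->]; exists (\max_(x <- finmap.enum_fset X) x).+1 => x /= xX.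
by rewrite ltnS; exact: (leq_bigmax_seq (F := id) x xX isT).
Qed.

Lemma bounded_finite_set (A : set nat) N :
  (forall x, A x -> x < N) -> finite_set A.
Proof. by move=> AN; apply: (sub_finite_set _ (finite_II N)) => x /AN. Qed.

Lemma infinite_natP (A : set nat) :
  infinite_set A <-> forall N, exists2 x, A x & N <= x.
Proof.
split=> [Ainf N|Aunb /finite_set_bounded [N AN]]; last first.
  by have [x /AN] := Aunb N; rewrite ltnNge => /negP.
apply: contrapT => /forall2NP noA; apply/Ainf/(@bounded_finite_set _ N) => x Ax.
by rewrite ltnNge; case: (noA x) => // /negP.
Qed.

Definition mono_AP (T : eqType) (col : nat -> T) (k N a d : nat) : Prop :=
  0 < d /\ forall i, i < k -> a + i * d < N /\ col (a + i * d) = col a.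

Definition vdW_bound (k : nat) (T : finType) (N : nat) : Prop :=
  forall col : nat -> T, exists a d, mono_AP col k N a d.

Definition vdW_room (k : nat) (T : finType) (N : nat) : Prop :=
  forall col : nat -> T, exists a d, mono_AP col k N a d /\ a + k * d < N.

(* Colour-focused progressions, as in the standard inductive proof of van der
   Waerden's theorem: their next terms all equal the focus p. *)
Definition focused_at (T : eqType) (col : nat -> T) (k N s p : nat)
    (a d : nat -> nat) : Prop :=
  [/\ p < N,
      forall j, j < s -> mono_AP col k N (a j) (d j) /\ a j + k * d j = p &
      forall j j', j < s -> j' < s -> col (a j) = col (a j') -> j = j'].

Definition focusing (k : nat) (T : finType) (s N : nat) : Prop :=
  forall col : nat -> T, (exists a d, mono_AP col k.+1 N a d) \/
    exists p a d, focused_at col k N s p a d.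

Lemma mono_AP_extend (T : eqType) (col : nat -> T) k N a d :
  mono_AP col k N a d -> a + k * d < N -> col (a + k * d) = col a ->
  mono_AP col k.+1 N a d.
Proof.
move=> [d_gt0 AP] next_lt next_col; split=> // i.
by rewrite ltnS leq_eqVlt => /orP[/eqP -> //|]; exact: AP.
Qed.

Lemma mono_AP_shift (T : eqType) (col : nat -> T) o k N N' a d :
  (forall x, x < N -> o + x < N') ->
  mono_AP (fun x => col (o + x)) k N a d -> mono_AP col k N' (o + a) d.
Proof.
move=> shift_lt [d_gt0 AP]; split=> // i /AP [lt_N col_eq].
by rewrite -addnA; split; [exact: shift_lt | exact: col_eq].
Qed.

Lemma vdW_bound_room k (T : finType) N : vdW_bound k T N -> vdW_room k T N.*2.+2.
Proof.
move=> vdW col; case: k vdW => [|[|k]] vdW.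
- by exists 0, 1.
- exists 0, 1; split=> //; split=> // i; rewrite ltnS leqn0 => /eqP -> //.
have [a [d [d_gt0 AP]]] := vdW col; exists a, d; split.
  by split=> // i /AP [? ?]; split=> //; lia.
have [lt_N _] := AP k.+1 (ltnSn _).
have : d <= k.+1 * d by rewrite leq_pmull.
rewrite mulSn; lia.
Qed.

Lemma focusing0 k (T : finType) : focusing k T 0 1.
Proof. by move=> col; right; exists 0, (fun _ => 0), (fun _ => 0). Qed.

Lemma focused_mono (T : eqType) (col : nat -> T) k N s p a d j :
  focused_at col k N s p a d -> j < s -> col (a j) = col p ->
  exists a d, mono_AP col k.+1 N a d.
Proof.
move=> [p_lt focus _] js same; have [mono a_p] := focus j js.
by exists (a j), (d j); apply: mono_AP_extend; rewrite // a_p.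
Qed.

Lemma focusing_vdW k (T : finType) N : focusing k T #|T| N -> vdW_bound k.+1 T N.
Proof.
move=> foc col; case: (foc col) => [//|[p [a [d focused]]]].
have [_ _ inj] := focused.
pose colour (j : 'I_#|T|) := col (a j).
have colour_inj : injective colour.
  by move=> j j' same; apply: val_inj; exact: inj (ltn_ord j) (ltn_ord j') same.
have := inj_card_onto colour_inj (eq_leq (esym (card_ord _))) (col p).
move=> /codomP [j same].
exact: focused_mono focused (ltn_ord j) (esym same).
Qed.

Lemma block_lt M L t x : t < L -> x < M -> M * t + x < M * L.
Proof.
move=> tL xM; have : M * t.+1 <= M * L by rewrite leq_mul2l tL orbT.
lia.
Qed.

Section Blocks.

Variables (T : eqType) (col : nat -> T) (k M L t0 e : nat).
Hypotheses (e_gt0 : 0 < e) (focus_lt : t0 + k * e < L).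
Hypothesis block_copy : forall i x, i < k -> x < M ->
  col (M * (t0 + i * e) + x) = col (M * t0 + x).

Lemma block_AP a d :
  (forall i, i < k -> a + i * d < M /\ col (M * t0 + (a + i * d)) = col (M * t0 + a)) ->
  forall i, i < k -> M * t0 + a + i * (d + M * e) < M * L /\
    col (M * t0 + a + i * (d + M * e)) = col (M * t0 + a).
Proof.
move=> AP i ik; have [lt_M col_eq] := AP i ik.
have -> : M * t0 + a + i * (d + M * e) = M * (t0 + i * e) + (a + i * d) by lia.
have : i * e <= k * e by rewrite leq_mul2r ltnW ?orbT.
by split; [apply: block_lt => //; lia | rewrite block_copy].
Qed.

(* The s progressions found in block t0 are spread over the blocks t0 + i e;
   their focus colour is new, so the copies of the focus form one more. *)
Lemma focused_blocks s p a d :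
  focused_at (fun x => col (M * t0 + x)) k M s p a d ->
  (forall j, j < s -> col (M * t0 + a j) <> col (M * t0 + p)) ->
  exists p' a' d', focused_at col k (M * L) s.+1 p' a' d'.
Proof.
move=> [p_lt focus inj] fresh.
pose a_ext j := if j < s then a j else p.
pose d_ext j := if j < s then d j else 0.
have ext j : j < s.+1 ->
    (forall i, i < k -> a_ext j + i * d_ext j < M /\
       col (M * t0 + (a_ext j + i * d_ext j)) = col (M * t0 + a_ext j)) /\
    a_ext j + k * d_ext j = p.
  rewrite ltnS leq_eqVlt /a_ext /d_ext => /orP[/eqP ->|js].
    by rewrite ltnn muln0 addn0; split=> // i _; rewrite muln0 addn0.
  by rewrite js; have [[_ AP] a_p] := focus j js.
exists (M * (t0 + k * e) + p), (fun j => M * t0 + a_ext j),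
  (fun j => d_ext j + M * e); split.
- exact: block_lt.
- move=> j js; have [AP a_p] := ext j js; split; last by lia.
  by split; [rewrite addn_gt0 muln_gt0 e_gt0 andbT; lia | exact: block_AP].
- move=> j j'; rewrite ltnS leq_eqVlt => /orP[/eqP ->|js];
    rewrite ltnS leq_eqVlt => /orP[/eqP ->|j's] //; rewrite /a_ext ?ltnn ?js ?j's.
  + by move/esym/fresh; rewrite j's => /(_ isT).
  + by move/fresh; rewrite js => /(_ isT).
  + exact: inj.
Qed.

End Blocks.

Lemma focusing_step k (T : finType) s M :
  (forall T' : finType, exists L, vdW_room k T' L) -> focusing k T s M ->
  exists N, focusing k T s.+1 N.
Proof.
move=> room foc; have [L roomL] := room {ffun 'I_M -> T}.
exists (M * L) => col.
have [t0 [e [[e_gt0 blocks] focus_lt]]] :=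
  roomL (fun t => [ffun x : 'I_M => col (M * t + x)]).
have t0_lt : t0 < L by lia.
have block_copy i x : i < k -> x < M ->
    col (M * (t0 + i * e) + x) = col (M * t0 + x).
  move=> ik xM; have [_ same] := blocks i ik.
  by have := congr1 (fun g : {ffun 'I_M -> T} => g (Ordinal xM)) same; rewrite !ffunE.
case: (foc (fun x => col (M * t0 + x))) => [[a [d mono]]|[p [a [d focused]]]].
  by left; exists (M * t0 + a), d; apply: mono_AP_shift mono => x /(block_lt t0_lt).
case: (pselect (exists2 j, j < s & col (M * t0 + a j) = col (M * t0 + p))).
  move=> [j js same]; left; have [a' [d' mono]] := focused_mono focused js same.
  by exists (M * t0 + a'), d'; apply: mono_AP_shift mono => x /(block_lt t0_lt).
move=> no_same; right; apply: (focused_blocks e_gt0 focus_lt block_copy focused).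
move=> j js same.
by apply: no_same; exists j.
Qed.

Theorem van_der_Waerden k (T : finType) : exists N, vdW_bound k T N.
Proof.
elim: k T => [|k IH] T; first by exists 0 => col; exists 0, 1.
have room T' : exists L, vdW_room k T' L.
  by have [N /vdW_bound_room] := IH T'; eexists.
have foc s : exists N, focusing k T s N.
  by elim: s => [|s [M /(focusing_step room)] //]; exists 1; exact: focusing0.
by have [N /focusing_vdW] := foc #|T|; exists N.
Qed.

Definition has_AP (X : set nat) (k : nat) : Prop :=
  exists a d, 0 < d /\ forall i, i < k -> X (a + i * d).

Lemma AP_setS (X Y : set nat) : X `<=` Y -> AP_set X -> AP_set Y.
Proof.
by move=> XY X_AP k; have [a [d [d_gt0 AP]]] := X_AP k; exists a, d; split=> // i /AP /XY.
Qed.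

Lemma finite_not_AP_set (X : set nat) : finite_set X -> ~ AP_set X.
Proof.
move=> /finite_set_bounded [N XN] /(_ N.+1) [a [d [d_gt0 AP]]].
have := XN _ (AP N (ltnSn N)); have : N <= N * d by rewrite leq_pmulr.
lia.
Qed.

Lemma AP_set_cover (B : set nat) (Q : nat -> set nat) n :
  AP_set B -> (forall x, B x -> exists2 i, i < n & Q i x) ->
  exists2 i, i < n & AP_set (B `&` Q i).
Proof.
case: n => [|n] B_AP cover.
  by have [a [d [_ /(_ 0 isT) /cover []]]] := B_AP 1.
have some_class x : exists i : 'I_n.+1, B x -> Q i x.
  case: (pselect (B x)) => [/cover [i i_lt Qi]|nBx]; last by exists ord0.
  by exists (Ordinal i_lt).
have [class class_spec] := choice some_class.
apply: contrapT => no_class.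
have short_AP (i : 'I_n.+1) : exists k, ~ has_AP (B `&` Q i) k.
  by apply/existsNP => all_AP; apply: no_class; exists i => //; exact: all_AP.
have [len no_AP] := choice short_AP.
have [N vdW] := van_der_Waerden (\max_i len i) 'I_n.+1.
have [a [d [d_gt0 AP_B]]] := B_AP N.
have [a' [d' [d'_gt0 mono]]] := vdW (fun t => class (a + t * d)).
apply: (no_AP (class (a + a' * d))); exists (a + a' * d), (d' * d).
split=> [|i i_lt]; first by rewrite muln_gt0 d'_gt0.
have [t_lt same] := mono i (leq_trans i_lt (leq_bigmax _)).
have -> : a + a' * d + i * (d' * d) = a + (a' + i * d') * d by lia.
by split; [exact: AP_B | rewrite -same; exact/class_spec/AP_B].
Qed.

Lemma AP_set_setD (B X : set nat) :
  AP_set B -> ~ AP_set (B `&` X) -> AP_set (B `\` X).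
Proof.
move=> B_AP no_AP.
have cover x : B x -> exists2 i, i < 2 & (if i == 0 then X else ~` X) x.
  by move=> _; case: (pselect (X x)) => Xx; [exists 0 | exists 1].
have [[|[|//]] _ AP] := AP_set_cover B_AP cover; last exact: AP.
by case: (no_AP AP).
Qed.

Lemma AP_set_avoid (B : set nat) (X : nat -> set nat) n :
  AP_set B -> (forall j, j < n -> ~ AP_set (B `&` X j)) ->
  AP_set [set x | B x /\ forall j, j < n -> ~ X j x].
Proof.
move=> B_AP; elim: n => [|n IH] no_AP.
  by apply: AP_setS B_AP => x Bx; split.
have no_AP_n : ~ AP_set ([set x | B x /\ forall j, j < n -> ~ X j x] `&` X n).
  apply: contra_not (no_AP n (ltnSn n)); apply: AP_setS => x [[Bx _] Xx].
  by split.
apply: AP_setS (AP_set_setD (IH (fun j jn => no_AP j (leqW jn))) no_AP_n).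
move=> x [[Bx avoid] nXx]; split=> // j.
by rewrite ltnS leq_eqVlt => /orP[/eqP -> //|]; exact: avoid.
Qed.

Lemma finite_to_one_bounded (B : set nat) f K :
  finite_to_one_on B f -> finite_set (B `&` [set x | f x <= K]).
Proof.
move=> fto; elim: K => [|K IH].
  by apply: sub_finite_set (fto 0) => x [Bx fx]; split=> //; apply/eqP; rewrite -leqn0.
have : finite_set ((B `&` [set x | f x <= K]) `|` (B `&` f @^-1` [set K.+1])).
  by rewrite finite_setU.
apply: sub_finite_set => x [Bx /= fx]; move: fx; rewrite leq_eqVlt => /orP[/eqP fx|fx].
  by right.
by left; split; rewrite // -ltnS.
Qed.

Definition thin (A : set nat) : Prop :=
  forall b, 0 < b -> finite_set [set c | A c /\ A (c + b)].

(* For generators c <> b of an IP-set, both c and c + b are finite sums. *)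
Lemma thin_not_IP (A : set nat) : thin A -> ~ IP_set A.
Proof.
move=> A_thin [E [E_inf E_FS]].
have [b Eb b_gt0] := (infinite_natP E).1 E_inf 1.
suff : infinite_set [set c | A c /\ A (c + b)] by apply; exact: A_thin.
apply: sub_infinite_set (infinite_setD E_inf (finite_set1 b)) => c [Ec c_neq_b].
split.
  by have := E_FS [:: c] isT isT; rewrite /= addn0; apply=> x; rewrite inE => /eqP ->.
have := E_FS [:: c; b]; rewrite /= addn0; apply=> //.
  by rewrite inE andbT; apply/eqP.
by move=> x; rewrite !inE => /orP[] /eqP ->.
Qed.

(* Beyond doubling growth, the difference of two elements exceeds the smaller. *)
Lemma thin_subset (D : set nat) :
  infinite_set D -> exists A, [/\ A `<=` D, infinite_set A & thin A].
Proof.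
move=> D_inf.
have above N : exists x, D x /\ N <= x.
  by have [x Dx Nx] := (infinite_natP D).1 D_inf N; exists x.
have [pick pick_spec] := choice above.
pose fix x k := if k is k'.+1 then pick (x k').*2.+1 else pick 0.
have x_D k : D (x k) by case: k => [|k]; exact: (pick_spec _).1.
have x_gap k : (x k).*2 < x k.+1 := (pick_spec _).2.
have x_incr : {homo x : m n / m < n}.
  by apply: homo_ltn ltn_trans _ => k; have := x_gap k; lia.
have x_ge k : k <= x k by elim: k => // k IH; have := x_gap k; lia.
exists (range x); split.
- by move=> _ [k _ <-].
- by apply/infinite_natP => N; exists (x N); [exists N | exact: x_ge].
move=> b b_gt0; apply: (@bounded_finite_set _ b) => _ [[j _ <-] [i _ x_i]].
have j_lt_i : j < i by rewrite -(leqW_mono (leq_mono x_incr)) x_i; lia.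
have : x j.+1 <= x i by rewrite (leq_mono x_incr).
have := x_gap j; lia.
Qed.

Section Capture.

Variables (B : set nat) (f : nat -> nat) (g : nat -> set nat).
Hypotheses (B_AP : AP_set B) (f_fto : finite_to_one_on B f).
Hypothesis g_no_AP : forall j, ~ AP_set (B `&` f @^-1` g j).

Definition stage_AP k M a d : Prop :=
  0 < d /\ forall i, i < k -> [/\ B (a + i * d),
    forall j, j <= k -> ~ g j (f (a + i * d)),
    k + M < f (a + i * d) & f (a + i * d) = f a %[mod k.+1]].

Lemma stage_AP_exists k M : exists ad : nat * nat, stage_AP k M ad.1 ad.2.
Proof.
have B1 := AP_set_setD B_AP (finite_not_AP_set (finite_to_one_bounded (k + M) f_fto)).
have B2 : AP_set [set x | (B `\` [set x | f x <= k + M]) x /\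
                          forall j, j < k.+1 -> ~ (f @^-1` g j) x].
  apply: (AP_set_avoid (X := fun j => f @^-1` g j)) B1 _ => j _.
  apply: contra_not (@g_no_AP j); apply: AP_setS => x [[Bx _] gx].
  by split.
have residue x : exists2 r, r < k.+1 & f x %% k.+1 = r.
  by exists (f x %% k.+1); rewrite ?ltn_pmod.
have [r _ /(_ k) [a [d [d_gt0 AP]]]] :=
  AP_set_cover (Q := fun r => [set x | f x %% k.+1 = r]) B2 (fun x _ => residue x).
exists (a, d); split=> //= i ik; have [[[Bx small] avoid] res_i] := AP i ik.
have [_ res_0] := AP 0 (leq_ltn_trans (leq0n i) ik); rewrite mul0n addn0 in res_0.
split; first exact: Bx.
- by move=> j jk; apply: avoid.
- by rewrite ltnNge; apply/negP.
- by rewrite /= res_i res_0.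
Qed.

Section Stages.

Variable ap : nat -> nat -> nat * nat.
Hypothesis ap_stage : forall k M, stage_AP k M (ap k M).1 (ap k M).2.

(* level k bounds the f-values of all stages before k; stage k lies above it. *)
Fixpoint level k : nat :=
  if k is k'.+1 then
    maxn (level k') (\max_(i < k') f ((ap k' (level k')).1 + i * (ap k' (level k')).2))
  else 0.

Definition term k i := (ap k (level k)).1 + i * (ap k (level k)).2.

Definition captured : set nat := [set x | exists k i, i < k /\ term k i = x].

Lemma term_stage k i : i < k ->
  [/\ B (term k i), forall j, j <= k -> ~ g j (f (term k i)),
      k + level k < f (term k i) & f (term k i) = f (term k 0) %[mod k.+1]].
Proof.
by move=> ik; have [_ /(_ i ik)] := ap_stage k (level k); rewrite /term mul0n addn0.
Qed.

Lemma f_term_le_level k i : i < k -> f (term k i) <= level k.+1.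
Proof.
move=> ik; apply: leq_trans (leq_maxr _ _).
exact: (leq_bigmax (F := fun i : 'I_k => f (term k i)) (Ordinal ik)).
Qed.

Lemma level_mono : {homo level : m n / m <= n}.
Proof. by apply: homo_leq leqnn leq_trans _ => k; exact: leq_maxl. Qed.

Lemma captured_sub : captured `<=` B.
Proof. by move=> _ [k [i [ik <-]]]; have [] := term_stage ik. Qed.

Lemma captured_AP : AP_set captured.
Proof.
move=> k; have [d_gt0 _] := ap_stage k (level k).
by exists (ap k (level k)).1, (ap k (level k)).2; split=> // i ik; exists k, i.
Qed.

Lemma captured_image_infinite : infinite_set (f @` captured).
Proof.
apply/infinite_natP => N; exists (f (term N.+1 0)).
  by exists (term N.+1 0) => //; exists N.+1, 0.
by have [_ _ ] := term_stage (ltn0Sn N); lia.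
Qed.

Lemma captured_image_almost_disjoint j : finite_set (f @` captured `&` g j).
Proof.
apply: (@bounded_finite_set _ (level j).+1) => _ [[_ [k [i [ik <-]]] <-] g_fx].
have [_ avoid _ _] := term_stage ik.
case: (leqP j k) => [jk|kj]; first by case: (avoid j jk).
have := level_mono kj; have := f_term_le_level ik; lia.
Qed.

(* Within stage j two values differ by a multiple of j + 1, across stages by
   more than the larger stage index. *)
Lemma captured_image_thin : thin (f @` captured).
Proof.
move=> b b_gt0; apply: (@bounded_finite_set _ (level b).+1).
move=> _ [[_ [j [i [ij <-]]] <-] [_ [l [i' [il <-]]] sum]].
rewrite ltnS leqNgt; apply/negP => big.
have [_ _ low_j res_j] := term_stage ij; have [_ _ low_l res_l] := term_stage il.
have up_j := f_term_le_level ij; have up_l := f_term_le_level il.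
have b_le_j : b <= j by rewrite leqNgt; apply/negP => /level_mono; lia.
case: (ltngtP l j) => [lj|jl|lj].
- have := level_mono lj; lia.
- have := level_mono jl; lia.
subst l; have : f (term j i) + b = f (term j i) + 0 %[mod j.+1].
  by rewrite addn0 -sum res_l res_j.
by move/eqP; rewrite eqn_modDl mod0n modn_small; lia.
Qed.

End Stages.

End Capture.

Lemma thin_capture (B : set nat) (f : nat -> nat) (g : nat -> set nat) :
  AP_set B -> finite_to_one_on B f -> (forall j, ~ AP_set (B `&` f @^-1` g j)) ->
  exists2 C, C `<=` B /\ AP_set C &
    [/\ infinite_set (f @` C), thin (f @` C) & forall j, finite_set (f @` C `&` g j)].
Proof.
move=> B_AP f_fto g_no_AP.
have [ap ap_stage] := choice (fun km : nat * nat =>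
  stage_AP_exists B_AP f_fto g_no_AP km.1 km.2).
pose ap' k M := ap (k, M).
have ap'_stage k M : stage_AP B f g k M (ap' k M).1 (ap' k M).2 := ap_stage (k, M).
exists (captured f ap'); split.
- exact: captured_sub ap'_stage.
- exact: captured_AP ap'_stage.
- exact: captured_image_infinite ap'_stage.
- exact: captured_image_thin ap'_stage.
- exact: captured_image_almost_disjoint ap'_stage.
Qed.

Definition admissible (G : set (set nat)) (A : set nat) : Prop :=
  [/\ infinite_set A, ~ IP_set A & forall A', G A' -> finite_set (A `&` A')].

Inductive task := Meet of set nat | Capture of set nat & (nat -> nat).

Definition task_valid (t : task) : Prop :=
  match t with
  | Meet D => infinite_set D
  | Capture B f => AP_set B /\ finite_to_one_on B f
  end.

Definition solves (t : task) (A : set nat) : Prop :=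
  match t with
  | Meet D => infinite_set (D `&` A)
  | Capture B f => exists2 C, C `<=` B /\ AP_set C & f @` C `<=` A
  end.

Lemma countable_enum (G : set (set nat)) :
  countable G ->
  exists g : nat -> set nat, G `<=` range g /\ forall j, G (g j) \/ g j = set0.
Proof.
move=> /pcard_surjP [g g_surj].
exists (fun j => if `[< G (g j) >] then g j else set0); split.
  by move=> A /[dup] GA /g_surj [j _ jA]; exists j => //; rewrite jA asboolT.
move=> j; case: (pselect (G (g j))) => Ggj; first by left; rewrite asboolT.
by right; rewrite asboolF.
Qed.

Lemma meet_extension (G : set (set nat)) D :
  infinite_set D -> (forall A', G A' -> finite_set (D `&` A')) ->
  exists A, admissible G A /\ infinite_set (D `&` A).
Proof.
move=> /thin_subset [A [AD A_inf A_thin]] D_ad; exists A; split.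
  split=> [//||A' /D_ad]; first exact: thin_not_IP.
  by apply: sub_finite_set => x [Ax A'x]; split=> //; exact: AD.
by rewrite setIidr.
Qed.

Lemma capture_extension (G : set (set nat)) B f :
  countable G -> AP_set B -> finite_to_one_on B f ->
  (forall A', G A' -> ~ AP_set (B `&` f @^-1` A')) ->
  exists A, admissible G A /\ exists2 C, C `<=` B /\ AP_set C & f @` C `<=` A.
Proof.
move=> /countable_enum [g [G_g g_G]] B_AP f_fto G_no_AP.
have g_no_AP j : ~ AP_set (B `&` f @^-1` g j).
  case: (g_G j) => [/G_no_AP //|->].
  by apply: finite_not_AP_set; rewrite preimage_set0 setI0; exact: finite_set0.
have [C C_ok [fC_inf fC_thin fC_ad]] := thin_capture B_AP f_fto g_no_AP.
exists (f @` C); split; last by exists C.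
split=> // [|A' /G_g [j _ <-]]; [exact: thin_not_IP | exact: fC_ad].
Qed.

Lemma task_extension (G : set (set nat)) t : countable G -> task_valid t ->
  (exists2 A, G A & solves t A) \/ exists A, admissible G A /\ solves t A.
Proof.
move=> G_cnt; case: t => [D D_inf|B f [B_AP f_fto]] /=.
  case: (pselect (exists2 A, G A & infinite_set (D `&` A))) => [|D_ad]; first by left.
  right; apply: meet_extension => // A GA; apply: contrapT => DA.
  by apply: D_ad; exists A.
case: (pselect (exists2 A, G A & AP_set (B `&` f @^-1` A))) => [[A GA AP]|no_AP].
  by left; exists A => //; exists (B `&` f @^-1` A) => [|_ [x [_ fx] <-]] //.
right; apply: capture_extension => // A GA AP.
by apply: no_AP; exists A.
Qed.

Section GreedyRecursion.

Variables (T S : Type) (lt : T -> T -> Prop) (R : T -> set S -> S -> Prop).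
Hypothesis lt_wf : well_founded lt.

Definition chosen_before (h : T -> option S) (X : T) : set S :=
  [set A | exists2 Y, lt Y X & h Y = Some A].

Lemma greedy_recursion : exists h : T -> option S, forall X,
  (forall A, h X = Some A -> R X (chosen_before h X) A) /\
  ((exists A, R X (chosen_before h X) A) -> exists A, h X = Some A).
Proof.
pose pick X G :=
  if pselect (exists A, R X G A) is left e then Some (projT1 (cid e)) else None.
have pick_spec X G : (forall A, pick X G = Some A -> R X G A) /\
    ((exists A, R X G A) -> exists A, pick X G = Some A).
  rewrite /pick; case: pselect => [e|//]; split=> [A [<-]|_]; last by eexists.
  exact: projT2 (cid e).
pose h := Fix lt_wf (fun _ => option S)
  (fun X rec => pick X [set A | exists Y (YX : lt Y X), rec Y YX = Some A]).
exists h => X; suff -> : h X = pick X (chosen_before h X) by exact: pick_spec.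
rewrite /h Fix_eq; last first.
  move=> Z r1 r2 r12; congr pick; apply/seteqP.
  by split=> A [Y [YX e]]; exists Y, YX; rewrite ?r12 // -r12.
congr pick; apply/seteqP; split=> A; first by case=> Y [YX e]; exists Y.
by case=> Y YX e; exists Y, YX.
Qed.

End GreedyRecursion.

Definition code (n m : nat) : nat := (pickle (n, m)).+1.

Lemma code_inj n m n' m' : code n m = code n' m' -> n = n' /\ m = m'.
Proof. by move=> /succn_inj /(pcan_inj (@pickleK _)) [-> ->]. Qed.

(* 0 flags a Meet task; code n 0 puts n in the set, code n (f n).+1 encodes f. *)
Definition decode (X : set nat) : task :=
  let B := [set n | X (code n 0)] in
  if `[< X 0 >] then Meet B else Capture B (fun n => xget 0 [set m | X (code n m.+1)]).

Lemma decode_surj t : exists X, decode X = t.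
Proof.
case: t => [D|B f].
  exists (0 |` [set code n 0 | n in D]); rewrite /decode asboolT; last by left.
  congr Meet; apply/seteqP; split=> n /=; last by right; exists n.
  by case=> [//|[n' Dn' /code_inj [<- _]]].
exists ([set code n 0 | n in B] `|` range (fun n => code n (f n).+1)).
rewrite /decode asboolF; last by case=> [[n _]|[n _]].
congr Capture.
  apply/seteqP; split=> n /=; last by left; exists n.
  by case=> [[n' Bn' /code_inj [<- _]]|[n' _ /code_inj [_ //]]].
apply: funext => n; apply: xget_unique; first by right; exists n.
by move=> m [[n' _ /code_inj [_ //]]|[n' _ /code_inj [-> /succn_inj]]].
Qed.

Lemma CH_admissible_family : CH -> exists F : set (set nat),
  [/\ almost_disjoint F, forall A, F A -> ~ IP_set A &
      forall t, task_valid t -> exists2 A, F A & solves t A].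
Proof.
move=> [lt [lt_wf [_ [lt_total lt_countable]]]].
have [h h_spec] :=
  greedy_recursion (fun X G A => admissible G A /\ solves (decode X) A) lt_wf.
pose F := [set A | exists X, h X = Some A].
have before_F X : chosen_before lt h X `<=` F by move=> A [Y _ hY]; exists Y.
have before_countable X : countable (chosen_before lt h X).
  apply: card_le_trans (lt_countable X).
  apply: card_le_trans (card_image_le (fun Y => odflt set0 (h Y)) _).
  by apply: subset_card_le => A [Y YX hY]; exists Y => //=; rewrite hY.
exists F; split.
- split=> [A [X /(h_spec X).1 [[]]] //|A A' [X hX] [Y hY] AA'].
  case: (lt_total X Y) => [XY|[XY|YX]].
  + by have [[_ _ ad] _] := (h_spec Y).1 _ hY; rewrite setIC; apply: ad; exists X.
  + by subst Y; move: hY; rewrite hX => -[].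
  + by have [[_ _ ad] _] := (h_spec X).1 _ hX; apply: ad; exists Y.
- by move=> A [X /(h_spec X).1 [[]]].
move=> t t_valid; have [X decX] := decode_surj t.
case: (task_extension (before_countable X) t_valid) => [[A /before_F FA]|].
  by exists A.
rewrite -decX => /(h_spec X).2 [A hX].
by exists A; [exists X | have [_] := (h_spec X).1 _ hX].
Qed.

Theorem lemma2p1 : CH ->
  exists F : set (set nat),
    MAD F /\ (forall A, F A -> ~ IP_set A) /\
    (forall (B : set nat) (f : nat -> nat), AP_set B -> finite_to_one_on B f ->
       exists C A : set nat, [/\ C `<=` B, AP_set C, F A & f @` C `<=` A]).
Proof.
move=> /CH_admissible_family [F [F_ad F_not_IP F_solves]].
exists F; split; [split=> // D D_inf | split=> // B f B_AP f_fto].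
  by have [A FA DA] := F_solves (Meet D) D_inf; exists A.
have [A FA [C [CB C_AP] fCA]] := F_solves (Capture B f) (conj B_AP f_fto).
by exists C, A.
Qed.
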